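(* Let $S$ be a set of patterns and let $f_n$ denote the number of rooted labeled forests on $[n]$ avoiding $S$. If the limit $L_S=\lim_{n\to\infty}\frac{f_n^{1/n}}{n}$ exists, then $L_S\in\{0\}\cup[e^{-1},1]$.
   Context: A rooted labeled forest on $[n]$ is an unordered forest on $n$ vertices, each component with a distinguished root, with distinct labels from $[n]$. A pattern of length $k$ is a permutation of $[k]$; an instance of it is a sequence of vertices $v_1,\dots,v_k$ with $v_i$ a strict ancestor of $v_{i+1}$ whose labels are in the same relative order as the pattern; a forest avoids $S$ if it contains no instance of any pattern in $S$. *)

From HB Require Import structures.
From mathcomp Require Import all_boot all_order all_algebra.
From mathcomp Require Import fingroup perm.
From mathcomp Require Import all_classical all_reals all_analysis.
Set Implicit Arguments. Unset Strict Implicit. Unset Printing Implicit Defensive.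
Import Order.TTheory GRing.Theory Num.Theory.

(* A rooted labeled forest on [n]: vertices are the labels 'I_n (= {0..n-1},
   standing for [n] = {1..n} shifted by one, order preserved).  It is encoded
   by its parent function: par v = None iff v is a root, par v = Some u iff u is
   the parent of v.  The parent map must be acyclic: iterating it from any
   vertex reaches None (a root's "parent") -- since a non-repeating walk has at
   most n vertices, n+1 steps is enough, so the bound below is no restriction. *)
Definition parent_fun (n : nat) := {ffun 'I_n -> option 'I_n}.

Definition climb n (par : parent_fun n) (k : nat) (v : 'I_n) : option 'I_n :=
  iter k (fun o => obind par o) (Some v).

Definition is_forest n (par : parent_fun n) : bool :=
  [forall v : 'I_n, [exists k : 'I_n.+1, climb par k v == None]].

Definition strict_anc n (par : parent_fun n) (u v : 'I_n) : Prop :=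
  exists k, (0 < k)%N /\ climb par k v = Some u.

Definition instance n k (par : parent_fun n) (pi : {perm 'I_k})
  (vs : 'I_k -> 'I_n) : Prop :=
  (forall (i j : 'I_k), val j = (val i).+1 -> strict_anc par (vs i) (vs j)) /\
  (forall (i j : 'I_k), (vs i < vs j)%N = (pi i < pi j)%N).

Definition contains n k (par : parent_fun n) (pi : {perm 'I_k}) : Prop :=
  exists vs, instance par pi vs.

Definition pattern_set := forall k : nat, pred {perm 'I_k}.

Definition avoids n (par : parent_fun n) (S : pattern_set) : Prop :=
  forall k (pi : {perm 'I_k}), pi \in S k -> ~ contains par pi.

Definition num_avoiding (S : pattern_set) (n : nat) : nat :=
  #|[set par : parent_fun n | is_forest par && `[< avoids par S >]]|.

(* Counting all parent functions gives f_n <= (n+1)^n, hence L <= 1.  If S contains no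
   increasing pattern, every forest whose labels decrease towards the roots avoids S (and
   symmetrically for decreasing patterns); there are n! such forests and n! >= (n/e)^n,
   hence L >= 1/e.  Otherwise S contains an increasing pattern of length a and a decreasing
   one of length b, so by the Erdos-Szekeres argument every vertex of an avoiding forest has
   fewer than ab ancestors.  Such a forest is determined by its depth function, with values
   in [ab], together with a choice for each vertex of a parent of smaller depth; for a
   bounded number of levels there are (o(n))^n such choices, hence L = 0. *)

From HB Require Import structures.
From mathcomp Require Import all_boot all_order all_algebra.
From mathcomp Require Import fingroup perm.
From mathcomp Require Import all_classical all_reals all_analysis.
From mathcomp Require Import zify lra.
Import Order.TTheory GRing.Theory Num.Theory.
Import numFieldNormedType.Exports.

Set Implicit Arguments. Unset Strict Implicit. Unset Printing Implicit Defensive.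
Local Notation inE := finset.inE.
Local Notation subsetP := fintype.subsetP.

Section Ancestry.
Variables (n : nat) (par : parent_fun n).

Lemma iter_obind_None k : iter k (fun o => obind par o) None = None.
Proof. by elim: k => //= k ->. Qed.

Lemma climbD j k v u : climb par j v = Some u -> climb par (k + j) v = climb par k u.
Proof. by move=> Hj; rewrite /climb iterD -/(climb par j v) Hj. Qed.

Lemma climbS_Some k v p : par v = Some p -> climb par k.+1 v = climb par k p.
Proof. by move=> Hp; rewrite /climb iterSr /= Hp. Qed.

Lemma climbS_None k v : par v = None -> climb par k.+1 v = None.
Proof. by move=> Hp; rewrite /climb iterSr /= Hp iter_obind_None. Qed.

Lemma strict_anc_trans w u v :
  strict_anc par u w -> strict_anc par w v -> strict_anc par u v.
Proof.
move=> [i [i_gt0 Hi]] [j [j_gt0 Hj]]; exists (i + j)%N; split; first lia.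
by rewrite (climbD _ Hj).
Qed.

Lemma strict_anc_par v p : par v = Some p -> strict_anc par p v.
Proof. by move=> Hp; exists 1%N; rewrite /climb /= Hp. Qed.

Lemma forest_strict_anc_irr u : is_forest par -> ~ strict_anc par u u.
Proof.
move=> /forallP/(_ u)/existsP[j /eqP Hj] [k [k_gt0 Hk]].
have climb_mul m : climb par (m * k) u = Some u.
  by elim: m => [|m IH] //; rewrite mulSn (climbD _ IH).
have := climb_mul j; rewrite -(subnK (leq_pmulr j k_gt0)).
by rewrite /climb iterD -/(climb par j u) Hj iter_obind_None.
Qed.

Definition ancestors (v : 'I_n) : {set 'I_n} := [set u | `[< strict_anc par u v >]].

Lemma ancestors_par_proper v p :
  is_forest par -> par v = Some p -> ancestors p \proper ancestors v.
Proof.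
move=> forest_par Hp; apply/fintype.properP; split.
  apply/subsetP => u; rewrite !inE => /asboolP Hu; apply/asboolP.
  exact: strict_anc_trans Hu (strict_anc_par Hp).
exists p; rewrite !inE; apply/asboolP; first exact: strict_anc_par.
exact: forest_strict_anc_irr.
Qed.

Lemma strict_anc_total v u w : u \in v |: ancestors v -> w \in v |: ancestors v ->
  u != w -> strict_anc par u w \/ strict_anc par w u.
Proof.
have climb_to x : x \in v |: ancestors v -> exists i, climb par i v = Some x.
  by rewrite !inE => /orP[/eqP-> | /asboolP[i [_ Hi]]]; [exists 0%N | exists i].
move=> /climb_to[i Hi] /climb_to[j Hj] neq_uw.
case: (ltngtP i j) => [lt_ij|lt_ji|eq_ij].
- right; exists (j - i)%N; split; first by rewrite subn_gt0.
  by rewrite -(climbD _ Hi) subnK // ltnW.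
- left; exists (i - j)%N; split; first by rewrite subn_gt0.
  by rewrite -(climbD _ Hj) subnK // ltnW.
- by move: Hi neq_uw; rewrite eq_ij Hj => -[->]; rewrite eqxx.
Qed.

Variable rank : 'I_n -> nat.
Hypothesis rank_par : forall v p, par v = Some p -> (rank v < rank p)%N.

Lemma rank_climb k v u : climb par k v = Some u -> (rank v + k <= rank u)%N.
Proof.
elim: k v => [|k IH] v; first by rewrite /climb /= => -[->]; rewrite addn0.
case Hp: (par v) => [p|]; last by rewrite (climbS_None _ Hp).
by rewrite (climbS_Some _ Hp) => /IH; have := rank_par Hp; lia.
Qed.

Lemma rank_strict_anc u v : strict_anc par u v -> (rank v < rank u)%N.
Proof. by move=> [k [k_gt0 /rank_climb]]; lia. Qed.

Lemma forest_of_rank : (forall v, rank v < n)%N -> is_forest par.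
Proof.
move=> rank_lt; apply/forallP => v; apply/existsP; exists ord_max; apply/eqP.
case Hn: (climb par n v) => [u|] //.
by have := rank_climb Hn; have := rank_lt u; lia.
Qed.

End Ancestry.

Definition anc_chain n (par : parent_fun n) k (vs : 'I_k -> 'I_n) :=
  forall i j : 'I_k, val j = (val i).+1 -> strict_anc par (vs i) (vs j).

Lemma anc_chain_lt n (par : parent_fun n) k (vs : 'I_k -> 'I_n) :
  anc_chain par vs -> forall i j : 'I_k, (i < j)%N -> strict_anc par (vs i) (vs j).
Proof.
move=> chain_vs i j; move Hd: (j - i.+1)%N => d; elim: d j Hd => [|d IH] j Hd lt_ij.
  by apply: chain_vs => /=; lia.
have lt_j'k : (j.-1 < k)%N by have := ltn_ord j; lia.
apply: (strict_anc_trans (w := vs (Ordinal lt_j'k))); first by apply: IH => /=; lia.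
by apply: chain_vs => /=; lia.
Qed.

Definition dir_lt (up : bool) : rel nat := fun x y => if up then (x < y)%N else (y < x)%N.

Lemma dir_lt_trans up : transitive (dir_lt up).
Proof. by case: up => y x z /=; lia. Qed.

Definition strict_mono_dir up k (f : 'I_k -> nat) :=
  forall i j : 'I_k, (i < j)%N -> dir_lt up (f i) (f j).

Lemma strict_mono_dirE up k (f : 'I_k -> nat) :
  strict_mono_dir up f <-> forall i j : 'I_k, (f i < f j)%N = dir_lt up i j.
Proof.
split=> [mono_f i j | f_ltE i j lt_ij]; last by case: up f_ltE => f_ltE; rewrite /= f_ltE.
case: (ltngtP i j) => [lt_ij|lt_ji|/val_inj->]; last by case: up {mono_f} => /=; rewrite !ltnn.
- by move: (mono_f _ _ lt_ij); case: up {mono_f} => /=; lia.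
- by move: (mono_f _ _ lt_ji); case: up {mono_f} => /=; lia.
Qed.

Definition monotone_pattern up k (pi : {perm 'I_k}) := strict_mono_dir up (fun i => val (pi i)).

Definition has_monotone_pattern (S : pattern_set) up :=
  exists k (pi : {perm 'I_k}), pi \in S k /\ monotone_pattern up pi.

Definition parent_in (T : finType) (P : pred T) : pred (option T) :=
  [pred o | if o is Some x then P x else true].

Lemma card_parent_in (T : finType) (P : pred T) : #|parent_in P| = #|P|.+1.
Proof.
have parent_inE : parent_in P =i None :: map Some (enum P).
  by case=> [x|]; rewrite !inE //= (mem_map (@Some_inj _)) mem_enum.
rewrite (eq_card parent_inE) (card_uniqP _).
  by rewrite /= size_map -cardE.
rewrite /= (map_inj_uniq (@Some_inj _)) enum_uniq andbT.
by apply/negP => /mapP[].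
Qed.

Lemma card_family_parent_in n (P : 'I_n -> pred 'I_n) :
  #|family (fun v => parent_in (P v))| = \prod_(v < n) #|P v|.+1.
Proof.
rewrite card_family foldrE big_map big_enum /=.
by apply: eq_bigr => v _; rewrite card_parent_in.
Qed.

Lemma card_ord_lt n m : (m <= n)%N -> #|[pred p : 'I_n | (p < m)%N]| = m.
Proof.
move=> le_mn; have widen_inj : injective (widen_ord le_mn).
  by move=> p q /(congr1 val) /= /val_inj.
rewrite -[RHS](card_ord m) -(fintype.card_image widen_inj); apply: eq_card => p.
rewrite !inE; apply/idP/fintype.imageP => [lt_pm | [q _ ->]]; last exact: (ltn_ord q).
by exists (Ordinal lt_pm) => //; apply: val_inj.
Qed.

Section DirectedForests.
Variables (up : bool) (n : nat).

Definition dir_rank (v : 'I_n) : nat := if up then (n.-1 - v)%N else v.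

Lemma dir_rank_lt (u v : 'I_n) : (dir_rank v < dir_rank u)%N = dir_lt up u v.
Proof. by rewrite /dir_rank; have := ltn_ord u; have := ltn_ord v; case: up => /=; lia. Qed.

Definition dir_parents (v : 'I_n) := parent_in (fun p : 'I_n => dir_lt up p v).

Variable par : parent_fun n.
Hypothesis par_dir : par \in family dir_parents.

Lemma dir_rank_par v p : par v = Some p -> (dir_rank v < dir_rank p)%N.
Proof. by move=> Hp; move/familyP/(_ v): par_dir; rewrite Hp dir_rank_lt. Qed.

Lemma dir_forest_is_forest : is_forest par.
Proof.
apply: (forest_of_rank dir_rank_par) => v.
by rewrite /dir_rank; have := ltn_ord v; case: up; lia.
Qed.

Lemma dir_forest_strict_anc u v : strict_anc par u v -> dir_lt up u v.
Proof. by move/(rank_strict_anc dir_rank_par); rewrite dir_rank_lt. Qed.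

Lemma dir_forest_avoids (S : pattern_set) : ~ has_monotone_pattern S up -> avoids par S.
Proof.
move=> no_mono k pi Spi [vs [chain_vs order_vs]]; apply: no_mono; exists k, pi; split=> //.
have mono_vs : strict_mono_dir up (fun i => val (vs i)).
  by move=> i j lt_ij; apply/dir_forest_strict_anc/anc_chain_lt.
apply/strict_mono_dirE => i j; rewrite -order_vs.
by move/strict_mono_dirE: mono_vs; apply.
Qed.

End DirectedForests.

Lemma card_dir_lt up n (v : 'I_n) :
  #|[pred p : 'I_n | dir_lt up p v]| = if up then val v else val (rev_ord v).
Proof.
case: up => /=; first by rewrite card_ord_lt // ltnW.
have := cardC [pred p : 'I_n | (p < v.+1)%N]; rewrite card_ord card_ord_lt // => cardCE.
rewrite (@eq_card _ _ [predC [pred p : 'I_n | (p < v.+1)%N]]) => [|p]; last first.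
  by rewrite !inE ltnNge.
by apply/eqP; rewrite -(eqn_add2l v.+1) cardCE subnKC.
Qed.

Lemma card_dir_forests up n : #|family (dir_parents up (n:=n))| = n`!.
Proof.
rewrite card_family_parent_in fact_prod big_add1 big_mkord /=.
under eq_bigr => v _ do rewrite card_dir_lt.
case: up; first by [].
by rewrite (reindex_inj rev_ord_inj); apply: eq_bigr => v _; rewrite rev_ordK.
Qed.

Lemma fact_le_num_avoiding up (S : pattern_set) n :
  ~ has_monotone_pattern S up -> (n`! <= num_avoiding S n)%N.
Proof.
move=> no_mono; rewrite -(card_dir_forests up); apply: subset_leq_card.
apply/subsetP => par par_dir; rewrite inE (dir_forest_is_forest par_dir) /=.
by apply/asboolP; exact: (dir_forest_avoids par_dir no_mono).
Qed.

Section LongestChains.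
Variables (n : nat) (par : parent_fun n).

Definition dir_chain up k (vs : 'I_k -> 'I_n) :=
  anc_chain par vs /\ strict_mono_dir up (fun i => val (vs i)).

Lemma dir_chain_const up k v : (k <= 1)%N -> dir_chain up (fun _ : 'I_k => v).
Proof. by move=> k_le1; split=> i j /=; have := ltn_ord i; have := ltn_ord j; lia. Qed.

Lemma dir_chain_snoc up k (vs : 'I_k.+1 -> 'I_n) w :
  dir_chain up vs -> strict_anc par (vs ord_max) w -> dir_lt up (vs ord_max) w ->
  dir_chain up (fun i : 'I_k.+2 => if (i < k.+1)%N then vs (inord i) else w).
Proof.
move=> [chain_vs mono_vs] anc_w lt_w.
have vs_max (i : 'I_k.+2) : val i = k -> vs (inord i) = vs ord_max.
  by move=> ik; congr vs; apply: val_inj; rewrite /= inordK ik.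
have vs_lt_w (i : 'I_k.+1) : dir_lt up (vs i) w.
  have [lt_ik|] := ltnP i k; first exact: dir_lt_trans (mono_vs i ord_max lt_ik) lt_w.
  by move=> le_ki; rewrite (_ : i = ord_max) //; apply: val_inj => /=; have := ltn_ord i; lia.
split=> [i j /= ij | i j lt_ij] /=; have := ltn_ord j.
all: rewrite ltnS leq_eqVlt => /orP[/eqP jk | lt_jk].
- by rewrite jk ltnn ifT ?vs_max //=; lia.
- by rewrite lt_jk ifT; [apply: chain_vs; rewrite /= !inordK //; lia | lia].
- by rewrite jk ltnn ifT //; lia.
- by rewrite lt_jk ifT; [apply: mono_vs; rewrite !inordK //; lia | lia].
Qed.

Definition chain_len up K (u : 'I_n) : nat :=
  \max_(k < K | `[< exists vs : 'I_k.+1 -> 'I_n, dir_chain up vs /\ vs ord_max = u >]) k.+1.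

Lemma chain_len_le up K u : (chain_len up K u <= K)%N.
Proof. by apply/bigmax_leqP => k _; exact: ltn_ord. Qed.

Lemma chain_len_gt0 up K u : (0 < K)%N -> (0 < chain_len up K u)%N.
Proof.
move=> K_gt0; apply: leq_trans (leq_bigmax_cond (Ordinal K_gt0) _) => //.
by apply/asboolP; exists (fun _ => u); split => //; exact: dir_chain_const.
Qed.

Lemma chain_len_lt up K u w : (0 < K)%N -> (forall vs : 'I_K.+1 -> 'I_n, ~ dir_chain up vs) ->
  strict_anc par u w -> dir_lt up u w -> (chain_len up K u < chain_len up K w)%N.
Proof.
move=> K_gt0 no_chain anc_uw lt_uw; have := chain_len_gt0 up w K_gt0.
move=> /prednK <-; rewrite ltnS; apply/bigmax_leqP => k /asboolP[vs [chain_vs vs_u]].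
rewrite -vs_u in anc_uw lt_uw; have chain_w := dir_chain_snoc chain_vs anc_uw lt_uw.
have [lt_kK | ] := ltnP k.+1 K.
  rewrite -ltnS prednK ?chain_len_gt0 //; apply: (leq_bigmax_cond (Ordinal lt_kK)).
  by apply/asboolP; eexists; split; [exact: chain_w | rewrite /= ltnn].
move=> le_Kk; have no_chain' : forall vs' : 'I_k.+2 -> 'I_n, ~ dir_chain up vs'.
  by have -> : k.+2 = K.+1 by have := ltn_ord k; lia.
by case: (no_chain' _ chain_w).
Qed.

Hypothesis forest_par : is_forest par.

Lemma chain_lens_neq K K' u w : (0 < K)%N -> (0 < K')%N ->
  (forall vs : 'I_K.+1 -> 'I_n, ~ dir_chain true vs) ->
  (forall vs : 'I_K'.+1 -> 'I_n, ~ dir_chain false vs) -> strict_anc par u w ->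
  (chain_len true K u, chain_len false K' u) != (chain_len true K w, chain_len false K' w).
Proof.
move=> K_gt0 K'_gt0 no_inc no_dec anc_uw; rewrite xpair_eqE negb_and.
case: (ltngtP u w) => [lt_uw | lt_wu | /val_inj eq_uw].
- by rewrite (ltn_eqF (chain_len_lt K_gt0 no_inc anc_uw lt_uw)).
- by rewrite (ltn_eqF (chain_len_lt K'_gt0 no_dec anc_uw lt_wu)) orbT.
- by move: anc_uw; rewrite eq_uw => /forest_strict_anc_irr.
Qed.

Lemma card_ancestors_lt a b v :
  (forall vs : 'I_a -> 'I_n, ~ dir_chain true vs) ->
  (forall vs : 'I_b -> 'I_n, ~ dir_chain false vs) -> (#|ancestors par v| < a * b)%N.
Proof.
move=> no_inc no_dec.
have long_chains m up : (forall vs : 'I_m -> 'I_n, ~ dir_chain up vs) ->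
    exists2 K, m = K.+1 & (0 < K)%N.
  case: m => [|[|K]] no_chain; [| | by exists K.+1];
    by case: (no_chain (fun=> v)); exact: dir_chain_const.
have [K a_eq K_gt0] := long_chains _ _ no_inc.
have [K' b_eq K'_gt0] := long_chains _ _ no_dec; subst a b.
(* Erdos-Szekeres: along the ancestor path of v, a vertex is determined by the lengths of
   the longest increasing and decreasing chains ending at it. *)
pose f u := (inord (chain_len true K u) : 'I_K.+1, inord (chain_len false K' u) : 'I_K'.+1).
have f_inj : {in v |: ancestors par v &, injective f}.
  move=> u w u_anc w_anc [/(congr1 val) + /(congr1 val)].
  rewrite /= !inordK ?ltnS ?chain_len_le // => eq_inc eq_dec.
  apply/eqP; apply: contraT => neq_uw.
  have [anc_uw | anc_wu] := strict_anc_total u_anc w_anc neq_uw.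
    by have := chain_lens_neq K_gt0 K'_gt0 no_inc no_dec anc_uw; rewrite eq_inc eq_dec eqxx.
  by have := chain_lens_neq K_gt0 K'_gt0 no_inc no_dec anc_wu; rewrite eq_inc eq_dec eqxx.
have v_notin : v \notin ancestors par v.
  by rewrite inE; apply/negP => /asboolP; exact: forest_strict_anc_irr.
have : (#|v |: ancestors par v| <= K.+1 * K'.+1)%N.
  rewrite -(card_in_imset f_inj); apply: leq_trans (max_card _) _.
  by rewrite card_prod !card_ord.
by rewrite cardsU1 v_notin.
Qed.

End LongestChains.

Lemma avoids_no_dir_chain (S : pattern_set) n (par : parent_fun n) up k (pi : {perm 'I_k}) :
  avoids par S -> pi \in S k -> monotone_pattern up pi ->
  forall vs : 'I_k -> 'I_n, ~ dir_chain par up vs.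
Proof.
move=> avoid_S Spi mono_pi vs [chain_vs mono_vs]; apply: (avoid_S k pi Spi).
exists vs; split=> // i j.
by move/strict_mono_dirE: mono_vs => ->; move/strict_mono_dirE: mono_pi => ->.
Qed.

Lemma num_avoiding_le_pow (S : pattern_set) n : (num_avoiding S n <= n.+1 ^ n)%N.
Proof.
apply: leq_trans (max_card _) _.
by rewrite card_ffun card_option card_ord.
Qed.

Lemma card_bigcup_le (I T : finType) (B : I -> {set T}) : (#|\bigcup_i B i| <= \sum_i #|B i|)%N.
Proof.
apply: (big_ind2 (fun (X : {set T}) m => #|X| <= m)%N) => [|X m Y k le_X le_Y|//].
  by rewrite cards0.
exact: leq_trans (leq_card_setU X Y).1 (leq_add le_X le_Y).
Qed.

Definition level_prod (T : finType) (A : {set T}) (g : T -> nat) : nat :=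
  \prod_(v in A) #|[set u in A | (g u < g v)%N]|.+1.

Lemma card_family_levels n (g : 'I_n -> nat) :
  #|family (fun v => parent_in (fun p : 'I_n => (g p < g v)%N))| = level_prod [set: 'I_n] g.
Proof.
rewrite card_family_parent_in /level_prod.
apply: congr_big => // [v | v _]; first by rewrite finset.in_setT.
by congr _.+1; apply: eq_card => u; rewrite !inE.
Qed.

Lemma forest_depth_family n (par : parent_fun n) : is_forest par ->
  par \in family (fun v => parent_in (fun p => (#|ancestors par p| < #|ancestors par v|)%N)).
Proof.
move=> forest_par; apply/familyP => v; rewrite inE /=.
by case Hp: (par v) => [p|] //; exact: proper_card (ancestors_par_proper forest_par Hp).
Qed.

Lemma num_avoiding_le_sum_level_prod (S : pattern_set) n h :
  (forall par : parent_fun n, is_forest par -> avoids par S ->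
     forall v, (#|ancestors par v| < h)%N) ->
  (num_avoiding S n <= \sum_(g : {ffun 'I_n -> 'I_h}) level_prod [set: 'I_n] (fun v => g v))%N.
Proof.
move=> depth_lt.
pose forests_of (g : {ffun 'I_n -> 'I_h}) :=
  [set par : parent_fun n in family (fun v => parent_in (fun p : 'I_n => (g p < g v)%N))].
apply: leq_trans (leq_trans _ (card_bigcup_le forests_of)) _.
  apply: subset_leq_card; apply/subsetP => par; rewrite inE => /andP[forest_par /asboolP avoid_S].
  pose depth := [ffun v => Ordinal (depth_lt par forest_par avoid_S v)].
  apply/finset.bigcupP; exists depth => //; rewrite inE; apply/familyP => v.
  move/familyP/(_ v): (forest_depth_family forest_par); rewrite !inE /=.
  by case: (par v) => // p; rewrite !ffunE.
by apply: leq_sum => g _; rewrite cardsE card_family_levels.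
Qed.

Lemma level_prod_le_pow (T : finType) (A : {set T}) g h :
  (forall v, v \in A -> g v <= h)%N -> (level_prod A g <= #|[set u in A | g u < h]|.+1 ^ #|A|)%N.
Proof.
move=> g_le; rewrite -prod_nat_const; apply: leq_prod => v vA; rewrite ltnS.
apply: subset_leq_card; apply/subsetP => u; rewrite !inE => /andP[-> lt_uv].
exact: leq_trans lt_uv (g_le v vA).
Qed.

Lemma level_prod_split (T : finType) (A : {set T}) g h (B := [set u in A | (g u < h)%N]) :
  (level_prod A g <= level_prod B g * #|A|.+1 ^ (#|A| - #|B|))%N.
Proof.
have sub_BA : B \subset A by apply/subsetP => u; rewrite inE => /andP[].
rewrite /level_prod (big_setID B) /= (finset.setIidPr sub_BA) leq_mul //.
  apply: leq_prod => v; rewrite inE => /andP[_ lt_vh]; rewrite ltnS.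
  apply: subset_leq_card; apply/subsetP => u; rewrite !inE => /andP[-> lt_uv].
  by rewrite (ltn_trans lt_uv lt_vh).
have -> : (#|A| - #|B| = #|A :\: B|)%N by rewrite cardsD (finset.setIidPr sub_BA).
rewrite -prod_nat_const; apply: leq_prod => v _.
by rewrite ltnS; apply: subset_leq_card; apply/subsetP => u; rewrite inE => /andP[].
Qed.

Local Open Scope classical_set_scope.
Local Open Scope ring_scope.

Section Rates.
Variable R : realType.

Lemma level_pow_bound (theta eta : R) m n b :
  0 < theta <= 1 -> 2 * theta <= eta -> (n <= m * b)%N -> (b <= n)%N -> (0 < n)%N ->
  (theta ^+ m * b%:R) ^+ b * n.+1%:R ^+ (n - b) <= (eta * n%:R) ^+ n.
Proof.
move=> /andP[theta_gt0 theta_le1] two_theta le_n_mb le_bn n_gt0; have theta_ge0 := ltW theta_gt0.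
apply: (@le_trans _ _ ((theta * n.+1%:R) ^+ n)).
  rewrite [leRHS]exprMn; have -> : n.+1%:R ^+ n = n.+1%:R ^+ b * n.+1%:R ^+ (n - b) :> R.
    by rewrite -exprD subnKC.
  rewrite mulrA ler_wpM2r ?exprn_ge0 // exprMn -exprM.
  apply: ler_pM; rewrite ?exprn_ge0 //; first exact: ler_wiXn2l.
  by apply: lerXn2r; rewrite ?nnegrE ?ler0n // ler_nat (leqW le_bn).
have eta_ge0 : 0 <= eta by apply: le_trans two_theta; rewrite mulr_ge0.
apply: lerXn2r; rewrite ?nnegrE ?mulr_ge0 //.
have : n.+1%:R <= 2 * n%:R :> R by rewrite -natrM ler_nat; lia.
by nra.
Qed.

Lemma level_prod_small h (eta : R) : 0 < eta -> exists N : nat,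
  forall (T : finType) (A : {set T}) (g : T -> nat), (forall v, v \in A -> g v < h)%N ->
  (N <= #|A|)%N -> (level_prod A g)%:R <= (eta * #|A|%:R) ^+ #|A|.
Proof.
elim: h eta => [|h IH] eta eta_gt0.
  exists 1%N => T A g g_lt; rewrite card_gt0 => /set0Pn[v /g_lt].
  by rewrite ltn0.
pose theta := Num.min 1 (eta / 2).
have theta_gt0 : 0 < theta by rewrite lt_min ltr01 divr_gt0.
have theta_le1 : theta <= 1 by rewrite ge_min lexx.
have two_theta : 2 * theta <= eta by rewrite mulrC -ler_pdivlMr // ge_min lexx orbT.
pose m := (Num.bound (2 / eta)).+1.
have eta_m : 2 < eta * m%:R.
  have bound_gt := archi_boundP (divr_ge0 (ler0n R 2) (ltW eta_gt0)).
  by rewrite mulrC -ltr_pdivrMr //; apply: lt_le_trans bound_gt _; rewrite ler_nat.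
have [N small_IH] := IH (theta ^+ m) (exprn_gt0 _ theta_gt0).
exists (m * N + m)%N => T A g g_lt large_A.
set n := #|A| in large_A *.
have eta_n : 2 < eta * n%:R.
  by apply: lt_le_trans eta_m _; rewrite ler_pM2l // ler_nat; lia.
(* B is everything above the deepest level h.  If B is small, every factor is at most
   #|B| + 1; otherwise induction applies to B and each vertex outside B has at most n + 1
   choices. *)
set B := [set u in A | (g u < h)%N]; set b := #|B|.
have [le_bm_n | lt_n_bm] := leqP (b * m) n.
  apply: (@le_trans _ _ (b.+1%:R ^+ n)).
    by rewrite -natrX ler_nat; apply: level_prod_le_pow => v /g_lt.
  apply: lerXn2r; rewrite ?nnegrE ?ler0n ?mulr_ge0 ?(ltW eta_gt0) //.
  have : 2 * b%:R <= eta * n%:R.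
    apply: (@le_trans _ _ (eta * m%:R * b%:R)); first by rewrite ler_wpM2r // ltW.
    by rewrite -mulrA ler_pM2l // -natrM ler_nat mulnC.
  by rewrite -natr1; nra.
have le_b_n : (b <= n)%N by apply: subset_leq_card; apply/subsetP => u; rewrite inE => /andP[].
have le_N_b : (N <= b)%N by rewrite -(@leq_pmul2r m) //; lia.
apply: (@le_trans _ _ (level_prod B g * n.+1 ^ (n - b))%:R).
  by rewrite ler_nat; exact: level_prod_split.
rewrite natrM natrX; apply: le_trans (level_pow_bound (m := m) _ two_theta _ le_b_n _); last first.
- by lia.
- by rewrite mulnC ltnW.
- by rewrite theta_gt0 theta_le1.
rewrite ler_wpM2r ?exprn_ge0 //; apply: small_IH => //.
by move=> v; rewrite inE => /andP[].
Qed.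

Lemma powR_exprK (y : R) n : 0 <= y -> (0 < n)%N -> (y ^+ n) `^ n%:R^-1 = y.
Proof.
by move=> y_ge0 n_gt0; rewrite -powR_mulrn // -powRrM mulfV ?powRr1 // pnatr_eq0 -lt0n.
Qed.

Lemma rate_le (x c : R) n : 0 <= x -> 0 <= c -> (0 < n)%N -> x <= (c * n%:R) ^+ n ->
  x `^ n%:R^-1 / n%:R <= c.
Proof.
move=> x_ge0 c_ge0 n_gt0 le_x; have cn_ge0 : 0 <= c * n%:R by rewrite mulr_ge0.
rewrite ler_pdivrMr ?ltr0n // -(powR_exprK cn_ge0 n_gt0).
by apply: ge0_ler_powR; rewrite ?nnegrE ?invr_ge0 ?exprn_ge0.
Qed.

Lemma rate_ge (x c : R) n : 0 <= x -> 0 <= c -> (0 < n)%N -> (c * n%:R) ^+ n <= x ->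
  c <= x `^ n%:R^-1 / n%:R.
Proof.
move=> x_ge0 c_ge0 n_gt0 ge_x; have cn_ge0 : 0 <= c * n%:R by rewrite mulr_ge0.
rewrite ler_pdivlMr ?ltr0n // -{1}(powR_exprK cn_ge0 n_gt0).
by apply: ge0_ler_powR; rewrite ?nnegrE ?invr_ge0 ?exprn_ge0.
Qed.

Section RateLimit.
Variables (f : nat -> nat) (L : R).
Hypothesis f_cvg : (fun n => (f n)%:R `^ n%:R^-1 / n%:R) @ \oo --> L.

Lemma cvg_rate_ge0 : 0 <= L.
Proof. by apply: (cvgr_to_ge f_cvg); apply: nearW => n; rewrite divr_ge0 ?powR_ge0. Qed.

Lemma cvg_rate_le c : 0 <= c ->
  (forall e, 0 < e -> \forall n \near \oo, (f n)%:R <= ((c + e) * n%:R) ^+ n) -> L <= c.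
Proof.
move=> c_ge0 f_le; apply/ler_addgt0Pr => e e_gt0; apply: (cvgr_to_le f_cvg).
near=> n; apply: rate_le; [exact: ler0n | by rewrite addr_ge0 // ltW | |].
- by near: n; exact: nbhs_infty_gt.
- by near: n; exact: f_le.
Unshelve. all: by end_near. Qed.

Lemma cvg_rate_ge c : 0 <= c -> (\forall n \near \oo, (c * n%:R) ^+ n <= (f n)%:R) -> c <= L.
Proof.
move=> c_ge0 f_ge; apply: (cvgr_to_ge f_cvg); near=> n.
apply: rate_ge => //; first by near: n; exact: nbhs_infty_gt.
by near: n.
Unshelve. all: by end_near. Qed.

End RateLimit.

Lemma fact_ge_pow n : (expR (-1) * n%:R) ^+ n <= n`!%:R :> R.
Proof.
case: n => [|m]; first by rewrite expr0 fact0.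
rewrite exprMn -expRM_natr mulN1r expRN mulrC ler_pdivrMr ?expR_gt0 //.
have : m.+1%:R ^+ m.+1 / m.+1`!%:R <= expR m.+1%:R :> R.
  by apply: le_trans (expR_ge1Dxn m (ler0n R m.+1)); rewrite lerDr ler01.
by rewrite ler_pdivrMr ?ltr0n ?fact_gt0 // mulrC.
Qed.

Lemma num_avoiding_le_near (S : pattern_set) (e : R) : 0 < e ->
  \forall n \near \oo, (num_avoiding S n)%:R <= ((1 + e) * n%:R) ^+ n.
Proof.
move=> e_gt0; have e_ge0 := ltW e_gt0; near=> n.
apply: (@le_trans _ _ (n.+1%:R ^+ n)); first by rewrite -natrX ler_nat num_avoiding_le_pow.
apply: lerXn2r; rewrite ?nnegrE ?ler0n ?mulr_ge0 ?addr_ge0 //.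
rewrite mulrDl mul1r -natr1 lerD2l -[leLHS](mulfV (lt0r_neq0 e_gt0)) ler_pM2l //.
near: n; exists (Num.bound e^-1) => // k /= le_k.
by apply: le_trans (ltW (archi_boundP _)) _; rewrite ?invr_ge0 ?ler_nat.
Unshelve. all: by end_near. Qed.

Lemma fact_pow_le_num_avoiding (S : pattern_set) up n : ~ has_monotone_pattern S up ->
  (expR (-1) * n%:R) ^+ n <= (num_avoiding S n)%:R :> R.
Proof.
move=> no_mono; apply: le_trans (fact_ge_pow n) _.
by rewrite ler_nat (fact_le_num_avoiding _ no_mono).
Qed.

Lemma num_avoiding_small (S : pattern_set) :
  has_monotone_pattern S true -> has_monotone_pattern S false ->
  forall e : R, 0 < e -> \forall n \near \oo, (num_avoiding S n)%:R <= (e * n%:R) ^+ n.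
Proof.
move=> [a [pa [Spa inc_pa]]] [b [pb [Spb dec_pb]]] e e_gt0.
(* [(a * b).+1] rather than [a * b] keeps [h%:R] invertible. *)
pose h := (a * b).+1.
have depth_lt n (par : parent_fun n) :
    is_forest par -> avoids par S -> forall v, (#|ancestors par v| < h)%N.
  move=> forest_par avoid_S v; apply/ltnW/card_ancestors_lt => //.
  - exact: avoids_no_dir_chain avoid_S Spa inc_pa.
  - exact: avoids_no_dir_chain avoid_S Spb dec_pb.
have [N level_small] := level_prod_small h (divr_gt0 e_gt0 (ltr0Sn R (a * b))).
near=> n.
have : (num_avoiding S n <= \sum_(g : {ffun 'I_n -> 'I_h}) level_prod [set: 'I_n] (fun v => g v))%N.
  by apply: num_avoiding_le_sum_level_prod; exact: depth_lt.
rewrite -(ler_nat R) natr_sum => /le_trans; apply.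
have N_le_n : (N <= #|[set: 'I_n]%SET|)%N by rewrite cardsT card_ord; near: n; exists N.
have g_lt (g : {ffun 'I_n -> 'I_h}) v : v \in [set: 'I_n]%SET -> (g v < h)%N by [].
apply: le_trans (ler_sum _ (fun g _ => level_small _ _ _ (g_lt g) N_le_n)) _.
rewrite sumr_const card_ffun cardsT !card_ord -[leLHS]mulr_natl natrX -exprMn mulrA.
by rewrite mulrCA mulfV ?mulr1 ?pnatr_eq0.
Unshelve. all: by end_near. Qed.

End Rates.

Unset Implicit Arguments. Set Strict Implicit.

Theorem corollary5p10 (R : realType) (S : pattern_set) (L : R) :
  (fun n : nat => ((num_avoiding S n)%:R `^ (n%:R^-1)) / n%:R) @ \oo --> L ->
  L = 0 \/ (expR (-1) <= L <= 1).
Proof.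
move=> f_cvg.
have [[inc dec] | no_mono] := pselect (has_monotone_pattern S true /\ has_monotone_pattern S false).
  left; apply/le_anti; rewrite (cvg_rate_ge0 f_cvg) andbT.
  apply: (cvg_rate_le f_cvg (lexx 0)) => e e_gt0; rewrite add0r.
  exact: num_avoiding_small.
right; apply/andP; split; last first.
  by apply: (cvg_rate_le f_cvg ler01) => e e_gt0; exact: num_avoiding_le_near.
have [up no_up] : exists up, ~ has_monotone_pattern S up.
  have [inc | no_inc] := pselect (has_monotone_pattern S true); last by exists true.
  by exists false => dec; apply: no_mono.
apply: (cvg_rate_ge f_cvg (ltW (expR_gt0 _))); apply: nearW => n.
exact: fact_pow_le_num_avoiding no_up.
Qed.
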